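(* Let $A_n=S_n\wr\mathrm{Aut}(\mathcal{T}_d)$, $\rho_n:A_n\to S_n$, $\sigma(f_1,\dots,f_n)\mapsto\sigma$, and $\kappa_k^n:A_n\to A_{n+d-1}$ ($1\le k\le n$) the maps defined in the context. Then each $\kappa_k^n$ is injective and the following hold for all $n$, all $g,h\in A_n$ and all $1\le k<\ell\le n$: (C1) $(gh)\kappa_k^n=(g)\kappa^n_{\rho_n(h)(k)}\,(h)\kappa_k^n$ (for all $1\le k\le n$); (C2) $((g)\kappa_\ell^n)\kappa_k^{n+d-1}=((g)\kappa_k^n)\kappa_{\ell+d-1}^{n+d-1}$; (C3) $\rho_{n+d-1}((g)\kappa_k^n)(i)=((\rho_n(g))\varsigma_k^n)(i)$ for all $i\notin\{k,k+1,\dots,k+d-1\}$. That is, $((A_n)_n,(\rho_n)_n,(\kappa_k^n)_{k\le n})$ is a $d$-ary cloning system.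
   Context: $d\ge2$, $\mathcal{T}_d$ is the rooted $d$-ary tree on words over $X=\{1,\dots,d\}$. Permutations act on the left ($\sigma\tau$ = first $\tau$, then $\sigma$). $S_n\wr G=S_n\ltimes G^n$ with elements $\sigma(g_1,\dots,g_n)$ and product $\sigma(f_1,\dots,f_n)\tau(g_1,\dots,g_n)=\sigma\tau(f_{\tau(1)}g_1,\dots,f_{\tau(n)}g_n)$. Each $f\in\mathrm{Aut}(\mathcal{T}_d)$ has a unique wreath recursion $f=\rho(f)(f^1,\dots,f^d)$ with $\rho(f)\in S_d$, $f^x\in\mathrm{Aut}(\mathcal{T}_d)$ and $f(xw)=\rho(f)(x)f^x(w)$. For $\sigma\in S_n$ and $1\le k\le n$, $(\sigma)\varsigma_k^n\in S_{n+d-1}$ is: for $i<k$, $i\mapsto\sigma(i)$ if $\sigma(i)<\sigma(k)$, $i\mapsto\sigma(i)+d-1$ if $\sigma(i)>\sigma(k)$; for $k\le i\le k+d-1$, $i\mapsto\sigma(k)+i-k$; for $i>k+d-1$, $i\mapsto\sigma(i-d+1)$ if $\sigma(i-d+1)<\sigma(k)$ and $i\mapsto\sigma(i-d+1)+d-1$ if $\sigma(i-d+1)>\sigma(k)$. For $\tau\in S_d$ let $\tau^{(k)}\in S_{n+d-1}$ send $k+j-1\mapsto k+\tau(j)-1$ ($1\le j\le d$) and fix other points. Define $(\sigma(f_1,\dots,f_n))\kappa_k^n=(\sigma)\varsigma_k^n\,\rho(f_k)^{(k)}\,(f_1,\dots,f_{k-1},f_k^1,\dots,f_k^d,f_{k+1},\dots,f_n)\in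 A_{n+d-1}$, where $f_k=\rho(f_k)(f_k^1,\dots,f_k^d)$. *)

From mathcomp Require Import all_boot.
Set Implicit Arguments. Unset Strict Implicit. Unset Printing Implicit Defensive.

(* Conventions: all indices are 0-based.  The alphabet X = {1..d} is 'I_d,
   positions 1..n are 'I_n (or nats < n). *)

Section Cloning.
Variable d : nat.

(* vertices of the rooted d-ary tree T_d: finite words over 'I_d *)
Definition word := seq 'I_d.
Definition tfun := word -> word.

(* Aut(T_d): bijections of the vertex set preserving length and prefixes
   (equivalently, graph automorphisms of the rooted tree). *)
Definition is_tree_aut (f : tfun) : Prop :=
  [/\ bijective f,
      forall w, size (f w) = size w &
      forall u v, take (size u) (f (u ++ v)) = f u].

(* wreath recursion f = rho(f) (f^1,...,f^d):  f (x :: w) = rho f x :: sec f x w *)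
Definition trho (f : tfun) : 'I_d -> 'I_d := fun x => head x (f [:: x]).
Definition tsec (f : tfun) (x : 'I_d) : tfun := fun w => behead (f (x :: w)).

(* raw elements sigma(f_1,...,f_n) of S_n wr Aut(T_d):
   a function on 'I_n (the permutation) and an 'I_n-indexed family of maps *)
Definition raw (n : nat) := (('I_n -> 'I_n) * ('I_n -> tfun))%type.

Definition inA n (g : raw n) : Prop :=
  bijective g.1 /\ forall i, is_tree_aut (g.2 i).

Definition rhon n (g : raw n) : 'I_n -> 'I_n := g.1.

(* product: sigma(f) tau(g) = (sigma o tau)(f_{tau 1} o g_1, ...),
   permutations and tree maps acting on the left *)
Definition mulA n (g h : raw n) : raw n :=
  (fun i => g.1 (h.1 i), fun i => fun w => g.2 (h.1 i) (h.2 i w)).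

Definition natp n (s : 'I_n -> 'I_n) (i : nat) : nat :=
  if insub i is Some j then val (s j) else i.
Definition natF n (F : 'I_n -> tfun) (i : nat) : tfun :=
  if insub i is Some j then F j else id.
Definition secn (f : tfun) (x : nat) : tfun :=
  if insub x is Some x' then tsec f x' else id.
(* turn a nat function into a function on 'I_m (identity where out of range) *)
Definition ordf m (F : nat -> nat) : 'I_m -> 'I_m := fun i => insubd i (F i).

Definition varsig_nat (s : nat -> nat) (k i : nat) : nat :=
  let sh j := if s j < s k then s j else s j + (d - 1) in
  if i < k then sh i
  else if i < k + d then s k + (i - k)
  else sh (i - (d - 1)).

Definition varsigma n (k : nat) (s : 'I_n -> 'I_n) : 'I_(n + d - 1) -> 'I_(n + d - 1) :=
  ordf (varsig_nat (natp s) k).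

Definition tauk m (t : 'I_d -> 'I_d) (k : nat) : 'I_m -> 'I_m :=
  ordf (fun i => if (k <= i) && (i < k + d) then k + natp t (i - k) else i).

Definition kappa n (k : nat) (g : raw n) : raw (n + d - 1) :=
  (fun i => varsigma k g.1 (@tauk (n + d - 1) (trho (natF g.2 k)) k i),
   fun i => let i := val i in
            if i < k then natF g.2 i
            else if i < k + d then secn (natF g.2 k) (i - k)
            else natF g.2 (i - (d - 1))).

End Cloning.

From mathcomp Require Import all_boot zify.
From Stdlib Require Import FunctionalExtensionality.
Set Implicit Arguments. Unset Strict Implicit. Unset Printing Implicit Defensive.

(* Positions of A_(n+d-1) are read relative to the cloned position k: each one is either
   [shift k j] for an old position j <> k, where [shift k] inserts d-1 new points right after k,
   or [k + o] with o < d, inside the block replacing k.  In these coordinates (σ(f_1,...,f_n))κ_k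
   sends [shift k j] to [shift (σ k) (σ j)] with label f_j, and [k + o] to [σ k + ρ(f_k) o] with
   label the section f_k^o.  Injectivity and (C1) then come from the wreath recursion of a
   product of tree automorphisms, and (C2) from the fact that inserting blocks at two distinct
   places commutes ([shift_comm], [shift_shiftC], [shift_block]). *)

Section TreeAut.
Variable d : nat.
Implicit Types (f g : tfun d) (x : 'I_d) (w : word d).

Section OneAut.
Variable f : tfun d.
Hypothesis f_aut : is_tree_aut f.

Lemma tree_aut_nil : f [::] = [::].
Proof. by case: f_aut => _ f_size _; apply/size0nil; rewrite f_size. Qed.

Lemma tree_aut_cons x w : f (x :: w) = trho f x :: tsec f x w.
Proof.
case: f_aut => _ f_size f_prefix; rewrite /trho /tsec.
have := f_prefix [:: x] w; have := f_size [:: x]; have := f_size (x :: w) => /=.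
case: (f [:: x]) => [|y [|]] //= _ _.
by case: (f (x :: w)) => [|y' w'] //= [->].
Qed.

Lemma tree_aut_single x : f [:: x] = [:: trho f x].
Proof.
by case: f_aut => _ f_size _; rewrite /trho; have := f_size [:: x]; case: (f [:: x]) => [|? []].
Qed.

Lemma trho_inj : injective (trho f).
Proof.
case: f_aut => [[g fK _]] _ _ x y eq_xy.
have : f [:: x] = f [:: y] by rewrite !tree_aut_single eq_xy.
by move/(can_inj fK) => [].
Qed.

Lemma tsec_aut x : is_tree_aut (tsec f x).
Proof.
case: f_aut => [[g fK gK]] f_size f_prefix; split.
- exists (fun v => behead (g (trho f x :: v))).
    by move=> w; rewrite /tsec tree_aut_cons /= -tree_aut_cons fK.
  move=> v; have := gK (trho f x :: v).
  case: (g (trho f x :: v)) => [|y w]; first by rewrite tree_aut_nil.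
  by rewrite tree_aut_cons => -[/trho_inj <- ->].
- by move=> w; rewrite /tsec size_behead f_size.
- by move=> u v; have := f_prefix (x :: u) v; rewrite !tree_aut_cons => -[].
Qed.

End OneAut.

Lemma tree_aut_id : is_tree_aut (@id (word d)).
Proof. by split=> // [|u v]; [exists id | rewrite take_size_cat]. Qed.

Lemma trho_comp f g : is_tree_aut f -> is_tree_aut g ->
  forall x, trho (fun w => f (g w)) x = trho f (trho g x).
Proof. by move=> f_aut g_aut x; rewrite /trho tree_aut_single // tree_aut_single. Qed.

Lemma tsec_comp f g : is_tree_aut f -> is_tree_aut g ->
  forall x, tsec (fun w => f (g w)) x = fun w => tsec f (trho g x) (tsec g x w).
Proof.
move=> f_aut g_aut x; apply: functional_extensionality => w.
by rewrite /tsec tree_aut_cons // tree_aut_cons.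
Qed.

Lemma eq_tree_aut f g : is_tree_aut f -> is_tree_aut g ->
  trho f =1 trho g -> (forall x, tsec f x =1 tsec g x) -> f =1 g.
Proof.
move=> f_aut g_aut eq_rho eq_sec [|x w]; first by rewrite !tree_aut_nil.
by rewrite !tree_aut_cons // eq_rho eq_sec.
Qed.

End TreeAut.

Section Cloning.
Variable d : nat.
Implicit Types n k : nat.

Lemma natpE n (s : 'I_n -> 'I_n) (i : 'I_n) : natp s i = s i.
Proof. by rewrite /natp valK. Qed.

Lemma natpE_lt n (s : 'I_n -> 'I_n) i (lt_in : i < n) : natp s i = s (Ordinal lt_in).
Proof. exact: (natpE s (Ordinal lt_in)). Qed.

Lemma natp_lt n (s : 'I_n -> 'I_n) i : i < n -> natp s i < n.
Proof. by move=> lt_in; rewrite (natpE_lt s lt_in). Qed.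

Lemma natp_inj n (s : 'I_n -> 'I_n) i j : injective s -> i < n -> j < n ->
  natp s i = natp s j -> i = j.
Proof.
by move=> s_inj lt_in lt_jn; rewrite (natpE_lt s lt_in) (natpE_lt s lt_jn) => /val_inj/s_inj[].
Qed.

Lemma natFE n (F : 'I_n -> tfun d) (i : 'I_n) : natF F i = F i.
Proof. by rewrite /natF valK. Qed.

Lemma natFE_lt n (F : 'I_n -> tfun d) i (lt_in : i < n) : natF F i = F (Ordinal lt_in).
Proof. exact: (natFE F (Ordinal lt_in)). Qed.

Lemma natF_aut n (F : 'I_n -> tfun d) i :
  (forall j, is_tree_aut (F j)) -> is_tree_aut (natF F i).
Proof. by move=> F_aut; rewrite /natF; case: insubP => [j _ _|_] //; apply: tree_aut_id. Qed.

Lemma secnE (f : tfun d) (x : 'I_d) : secn f x = tsec f x.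
Proof. by rewrite /secn valK. Qed.

Lemma secn_aut (f : tfun d) x : is_tree_aut f -> is_tree_aut (secn f x).
Proof.
by move=> f_aut; rewrite /secn; case: insubP => [y _ _|_]; [apply: tsec_aut | apply: tree_aut_id].
Qed.

Lemma secn_comp (f g : tfun d) x : is_tree_aut f -> is_tree_aut g -> x < d ->
  secn (fun w => f (g w)) x = fun w => secn f (natp (trho g) x) (secn g x w).
Proof.
move=> f_aut g_aut lt_xd; rewrite (natpE_lt _ lt_xd) !(secnE _ (Ordinal lt_xd)) /=.
by rewrite tsec_comp // secnE.
Qed.

Lemma raw_eqP n (g g' : raw d n) :
  (forall i, i < n -> natp g.1 i = natp g'.1 i /\ natF g.2 i = natF g'.2 i) -> g = g'.
Proof.
case: g g' => [s F] [s' F'] /= eq_gg'.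
congr pair; apply: functional_extensionality => i; have [eq_s eq_F] := eq_gg' _ (ltn_ord i).
  by apply: val_inj; move: eq_s; rewrite !natpE.
by move: eq_F; rewrite !natFE.
Qed.

Definition trho_at n (g : raw d n) k : nat -> nat := natp (trho (natF g.2 k)).

Lemma trho_at_lt n (g : raw d n) k o : o < d -> trho_at g k o < d.
Proof. exact: natp_lt. Qed.

Lemma trho_at_inj n (g : raw d n) k o o' : inA g -> o < d -> o' < d ->
  trho_at g k o = trho_at g k o' -> o = o'.
Proof. by case=> _ g_aut; apply/natp_inj/trho_inj/natF_aut. Qed.

Lemma trho_at_onto n (g : raw d n) k y : inA g -> y < d ->
  exists2 o, o < d & trho_at g k o = y.
Proof.
case=> _ g_aut lt_yd; have [r _ rK] := injF_bij (trho_inj (natF_aut k g_aut)).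
by exists (r (Ordinal lt_yd)); rewrite // /trho_at natpE rK.
Qed.

Lemma perm_inj n (g : raw d n) i j : inA g -> i < n -> j < n ->
  natp g.1 i = natp g.1 j -> i = j.
Proof. by case=> [[r gK _]] _; apply/natp_inj/(can_inj gK). Qed.

Lemma natp_mulA n (g h : raw d n) i : i < n ->
  natp (mulA g h).1 i = natp g.1 (natp h.1 i).
Proof. by move=> lt_in; rewrite !(natpE_lt _ lt_in) natpE. Qed.

Lemma natF_mulA n (g h : raw d n) i : i < n ->
  natF (mulA g h).2 i = fun w => natF g.2 (natp h.1 i) (natF h.2 i w).
Proof. by move=> lt_in; rewrite !(natFE_lt _ lt_in) (natpE_lt _ lt_in) natFE. Qed.

Lemma trho_at_mulA n (g h : raw d n) k o : inA g -> inA h -> k < n -> o < d ->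
  trho_at (mulA g h) k o = trho_at g (natp h.1 k) (trho_at h k o).
Proof.
move=> [_ g_aut] [_ h_aut] lt_kn lt_od.
rewrite /trho_at natF_mulA // !(natpE_lt _ lt_od) trho_comp ?natpE //; exact: natF_aut.
Qed.

Definition shift (k j : nat) : nat := if j < k then j else j + (d - 1).

Lemma shift_small k j : j < k -> shift k j = j.
Proof. by rewrite /shift => ->. Qed.

Lemma shift_large k j : k < j -> shift k j = j + (d - 1).
Proof. by move=> /ltnW; rewrite /shift ltnNge => ->. Qed.

Lemma shift_out k j : j != k -> ~~ ((k <= shift k j) && (shift k j < k + d)).
Proof. by rewrite /shift; case: ifP; lia. Qed.

Lemma shift_inj k j j' : j != k -> j' != k -> shift k j = shift k j' -> j = j'.
Proof. by rewrite /shift; repeat case: ifP; lia. Qed.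

Lemma shift_addn k l o : k < l -> shift k (l + o) = shift k l + o.
Proof. by move=> kl; rewrite !shift_large //; lia. Qed.

Lemma shift_comm k l j : k < l -> shift k (shift l j) = shift (shift k l) (shift k j).
Proof. by rewrite /shift; repeat case: ifP; lia. Qed.

Lemma shift_shiftC a b c : a != b -> c != a -> c != b ->
  shift (shift a b) (shift a c) = shift (shift b a) (shift b c).
Proof. by rewrite /shift; repeat case: ifP; lia. Qed.

Lemma shift_block a b o : a != b -> o < d -> shift (shift a b) (a + o) = shift b a + o.
Proof. by rewrite /shift; repeat case: ifP; lia. Qed.

Lemma shift_neq k j j' : j != k -> j' != k -> j != j' -> shift k j != shift k j'.
Proof. by move=> jk j'k; apply: contra_neq; apply: shift_inj. Qed.

Lemma varsig_shift (s : nat -> nat) k j : j != k ->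
  varsig_nat d s k (shift k j) = shift (s k) (s j).
Proof.
move=> jk; case: (ltnP j k) => [jltk|kj].
  by rewrite shift_small // /varsig_nat jltk.
rewrite shift_large /varsig_nat; last lia.
have -> : (j + (d - 1) < k) = false by lia.
have -> : (j + (d - 1) < k + d) = false by lia.
by rewrite addnK.
Qed.

Lemma varsig_block (s : nat -> nat) k o : o < d -> varsig_nat d s k (k + o) = s k + o.
Proof.
move=> od; rewrite /varsig_nat addKn.
have -> : (k + o < k) = false by lia.
by have -> : (k + o < k + d) = true by lia.
Qed.

Hypothesis d_gt0 : 0 < d.

Lemma shift_ltn n k j : j < n -> shift k j < n + d - 1.
Proof. by rewrite /shift; case: ifP; lia. Qed.

Variant position_spec (n k i : nat) : Prop :=
  | PositionOut j of j < n & j != k & i = shift k j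
  | PositionIn o of o < d & i = k + o.

Lemma positionP n k i : k < n -> i < n + d - 1 -> position_spec n k i.
Proof.
move=> kn ilt; case: (ltnP i k) => [ik|ki].
  by apply: (@PositionOut _ _ _ i); rewrite ?shift_small //; lia.
case: (ltnP i (k + d)) => [ikd|kdi].
  by apply: (@PositionIn _ _ _ (i - k)); lia.
by apply: (@PositionOut _ _ _ (i - (d - 1))); rewrite ?shift_large; lia.
Qed.

Variant position2_spec (n k l i : nat) : Prop :=
  | Position2Out j of j < n & j != k & j != l & i = shift k (shift l j)
  | Position2InK o of o < d & i = k + o
  | Position2InL o of o < d & i = shift k (l + o).

Lemma position2P n k l i : k < l -> l < n -> i < n + d - 1 + d - 1 ->
  position2_spec n k l i.
Proof.
move=> kl ln lt_i; have lt_kn : k < n + d - 1 by lia.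
case: (positionP lt_kn lt_i) => [J lt_J Jk ->|o lt_od ->]; last exact: Position2InK _ _ lt_od _.
move: Jk; case: (positionP ln lt_J) => [j lt_jn jl ->|o lt_od ->] Jk;
  last exact: Position2InL _ _ lt_od _.
apply: (@Position2Out _ _ _ _ j) => //; move: Jk; apply: contra_neq => ->.
exact: shift_small.
Qed.

Lemma val_ordf m (F : nat -> nat) (i : 'I_m) : F i < m -> val (ordf F i) = F i.
Proof. by move=> Fi; rewrite /ordf val_insubd Fi. Qed.

Lemma tauk_out m (t : 'I_d -> 'I_d) k (i : 'I_m) :
  ~~ ((k <= i) && (i < k + d)) -> tauk t k i = i.
Proof. by move=> out; apply: val_inj; rewrite val_ordf (negbTE out). Qed.

Lemma val_tauk_block m (t : 'I_d -> 'I_d) k o (lt_m : k + o < m) : o < d ->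
  k + natp t o < m -> val (tauk t k (Ordinal lt_m)) = k + natp t o.
Proof.
move=> lt_od lt_tm; have in_blk : (k <= k + o) && (k + o < k + d) by lia.
by rewrite val_ordf /= in_blk addKn.
Qed.

Lemma kappa_perm_shift n (g : raw d n) k j : j < n -> j != k ->
  natp (kappa k g).1 (shift k j) = shift (natp g.1 k) (natp g.1 j).
Proof.
move=> lt_jn jk; have lt_m := shift_ltn k lt_jn.
rewrite (natpE_lt _ lt_m) /= tauk_out ?shift_out // val_ordf /= varsig_shift //.
exact/shift_ltn/natp_lt.
Qed.

Lemma kappa_perm_block n (g : raw d n) k o : k < n -> o < d ->
  natp (kappa k g).1 (k + o) = natp g.1 k + trho_at g k o.
Proof.
move=> lt_kn lt_od; have lt_m : k + o < n + d - 1 by lia.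
have lt_t : natp (trho (natF g.2 k)) o < d := trho_at_lt g k lt_od.
have lt_gk := natp_lt g.1 lt_kn.
by rewrite (natpE_lt _ lt_m) /= val_ordf val_tauk_block ?varsig_block //; lia.
Qed.

Lemma kappa_tree_shift n (g : raw d n) k j : j < n -> j != k ->
  natF (kappa k g).2 (shift k j) = natF g.2 j.
Proof.
move=> lt_jn jk; rewrite (natFE_lt _ (shift_ltn k lt_jn)) /=.
case: (ltnP j k) => [jk'|kj]; first by rewrite shift_small // jk'.
rewrite shift_large //; last lia.
have -> : (j + (d - 1) < k) = false by lia.
have -> : (j + (d - 1) < k + d) = false by lia.
by rewrite addnK.
Qed.

Lemma kappa_tree_block n (g : raw d n) k o : k < n -> o < d ->
  natF (kappa k g).2 (k + o) = secn (natF g.2 k) o.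
Proof.
move=> lt_kn lt_od; have lt_m : k + o < n + d - 1 by lia.
rewrite (natFE_lt _ lt_m) /= addKn.
have -> : (k + o < k) = false by lia.
by have -> : (k + o < k + d) = true by lia.
Qed.

Lemma trho_at_kappa_shift n (g : raw d n) k j : j < n -> j != k ->
  trho_at (kappa k g) (shift k j) = trho_at g j.
Proof. by move=> lt_jn jk; rewrite /trho_at kappa_tree_shift. Qed.

Lemma kappa_perm_small n (g : raw d n) k l : k < l -> l < n ->
  natp (kappa l g).1 k = shift (natp g.1 l) (natp g.1 k).
Proof. by move=> kl ln; rewrite -{1}(shift_small kl) kappa_perm_shift //; lia. Qed.

Lemma kappa_tree_small n (g : raw d n) k l : k < l -> l < n ->
  natF (kappa l g).2 k = natF g.2 k.
Proof. by move=> kl ln; rewrite -{1}(shift_small kl) kappa_tree_shift //; lia. Qed.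

Lemma perm_neq n (g : raw d n) j k : inA g -> j < n -> k < n -> j != k ->
  natp g.1 j != natp g.1 k.
Proof. by move=> g_inA lt_jn lt_kn; apply: contra_neq; apply: perm_inj. Qed.

Lemma kappa_perm_inj n (g : raw d n) k i i' : inA g -> k < n ->
  i < n + d - 1 -> i' < n + d - 1 ->
  natp (kappa k g).1 i = natp (kappa k g).1 i' -> i = i'.
Proof.
move=> g_inA lt_kn lt_i lt_i'; have neq := perm_neq g_inA _ lt_kn.
have out_neq_block j o : j < n -> j != k -> o < d ->
    shift (natp g.1 k) (natp g.1 j) != natp g.1 k + trho_at g k o.
  move=> lt_jn jk lt_od; have := shift_out (neq j lt_jn jk).
  by have := trho_at_lt g k lt_od; lia.
case: (positionP lt_kn lt_i) => [j lt_jn jk ->|o lt_od ->];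
case: (positionP lt_kn lt_i') => [j' lt_j'n j'k ->|o' lt_o'd ->];
rewrite ?kappa_perm_shift ?kappa_perm_block //.
- by move/shift_inj => /(_ (neq _ lt_jn jk) (neq _ lt_j'n j'k))/(perm_inj g_inA) ->.
- by move/eqP; rewrite (negbTE (out_neq_block _ _ lt_jn jk lt_o'd)).
- by move/esym/eqP; rewrite (negbTE (out_neq_block _ _ lt_j'n j'k lt_od)).
- by move/addnI/(trho_at_inj g_inA lt_od lt_o'd) ->.
Qed.

Lemma inA_kappa n k (g : raw d n) : k < n -> inA g -> inA (kappa k g).
Proof.
move=> lt_kn g_inA; split.
  apply: injF_bij => i i' eq_ii'; apply/val_inj.
  by apply: (kappa_perm_inj g_inA lt_kn (ltn_ord i) (ltn_ord i')); rewrite !natpE eq_ii'.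
case: g_inA => _ g_aut i /=.
by case: ifP => _; [|case: ifP => _]; [| apply: secn_aut |]; apply: natF_aut.
Qed.

Lemma kappa_inj n k (g g' : raw d n) : k < n -> inA g -> inA g' ->
  kappa k g = kappa k g' -> g = g'.
Proof.
move=> lt_kn g_inA g'_inA eq_gg'.
have blockE o : o < d -> natp g.1 k + trho_at g k o = natp g'.1 k + trho_at g' k o.
  by move=> lt_od; rewrite -!kappa_perm_block // eq_gg'.
have eq_k : natp g.1 k = natp g'.1 k.
  have [o lt_od t0] := trho_at_onto k g_inA d_gt0.
  have [o' lt_o'd t'0] := trho_at_onto k g'_inA d_gt0.
  by have := blockE o lt_od; have := blockE o' lt_o'd; lia.
have eq_rho o : o < d -> trho_at g k o = trho_at g' k o.
  by move/blockE; rewrite eq_k => /addnI.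
apply: raw_eqP => j lt_jn; have [->|jk] := eqVneq j k; split.
- by [].
- case: g_inA g'_inA => _ g_aut [_ g'_aut].
  apply: functional_extensionality; apply: eq_tree_aut; try exact: natF_aut.
    by move=> x; apply: val_inj; have := eq_rho x (ltn_ord x); rewrite /trho_at !natpE.
  move=> x; have := congr1 (fun h => natF h.2 (k + x)) eq_gg'.
  by rewrite /= !kappa_tree_block // !secnE => ->.
- move: (congr1 (fun h => natp h.1 (shift k j)) eq_gg') => /=.
  rewrite !kappa_perm_shift // eq_k => /shift_inj; apply.
  + by rewrite -eq_k; apply: perm_neq.
  + exact: perm_neq.
- by have := congr1 (fun h => natF h.2 (shift k j)) eq_gg'; rewrite /= !kappa_tree_shift.
Qed.

Lemma kappa_mulA n k (g h : raw d n) : k < n -> inA g -> inA h ->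
  kappa k (mulA g h) = mulA (kappa (natp (rhon h) k) g) (kappa k h).
Proof.
move=> lt_kn g_inA h_inA; rewrite /rhon; set hk := natp h.1 k.
have lt_hk : hk < n := natp_lt h.1 lt_kn.
have [_ g_aut] := g_inA; have [_ h_aut] := h_inA.
apply: raw_eqP => i lt_i; rewrite natp_mulA // natF_mulA //.
case: (positionP lt_kn lt_i) => [j lt_jn jk ->|o lt_od ->]; split.
- have neq_hj : natp h.1 j != hk by apply: perm_neq.
  by rewrite !kappa_perm_shift ?natp_lt // !natp_mulA.
- have neq_hj : natp h.1 j != hk by apply: perm_neq.
  by rewrite kappa_perm_shift // !kappa_tree_shift ?natp_lt // natF_mulA.
- have lt_t := trho_at_lt h k lt_od.
  by rewrite !kappa_perm_block // natp_mulA // trho_at_mulA.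
- rewrite kappa_perm_block // !kappa_tree_block ?trho_at_lt // natF_mulA //.
  by rewrite secn_comp //; apply: natF_aut.
Qed.

Lemma kappa_kappa n k l (g : raw d n) : k < l -> l < n -> inA g ->
  kappa k (kappa l g) = kappa (l + d - 1) (kappa k g).
Proof.
move=> kl ln g_inA; have lt_kn := ltn_trans kl ln.
have kl_neq : k != l by rewrite ltn_eqF.
have lk : l != k by rewrite eq_sym.
have -> : l + d - 1 = shift k l by rewrite shift_large //; lia.
have lt_kl : shift k l < n + d - 1 := shift_ltn k ln.
have lt_kn' : k < n + d - 1 by lia.
have neq := perm_neq g_inA.
have Pk := kappa_perm_small g kl ln; have Fk := kappa_tree_small g kl ln.
have Tk : trho_at (kappa l g) k = trho_at g k by rewrite /trho_at Fk.
apply: raw_eqP => i lt_i.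
case: (position2P kl ln lt_i) => [j lt_jn jk jl ->|o lt_od ->|o lt_od ->].
- have lt_lj := shift_ltn l lt_jn; have lt_kj := shift_ltn k lt_jn.
  have ljk : shift l j != k by rewrite -[X in _ != X](shift_small kl) shift_neq.
  have kjl : shift k j != shift k l by rewrite shift_neq.
  rewrite kappa_perm_shift // Pk kappa_perm_shift // kappa_tree_shift // kappa_tree_shift //.
  rewrite [shift k (shift l j)]shift_comm // !kappa_perm_shift // !kappa_tree_shift //.
  by rewrite shift_shiftC ?neq // eq_sym neq.
- have lt_t := trho_at_lt g k lt_od.
  have lt_ko : k + o < n + d - 1 by lia.
  have ko_kl : k + o != shift k l by rewrite shift_large //; lia.
  rewrite kappa_perm_block // kappa_tree_block // Pk Tk Fk.
  rewrite -[k + o](@shift_small (shift k l)); last by rewrite shift_large //; lia.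
  rewrite kappa_perm_shift // kappa_tree_shift // kappa_perm_block // kappa_tree_block //.
  by rewrite kappa_perm_shift // shift_block ?neq.
- have lt_t := trho_at_lt g l lt_od.
  have lt_lo : l + o < n + d - 1 by lia.
  have lok : l + o != k by lia.
  rewrite kappa_perm_shift // kappa_tree_shift // Pk kappa_perm_block // kappa_tree_block //.
  rewrite shift_block ?neq // [shift k (l + o)]shift_addn //.
  rewrite kappa_perm_block // kappa_tree_block // trho_at_kappa_shift //.
  by rewrite kappa_perm_shift // kappa_tree_shift.
Qed.

Lemma rhon_kappa_out n k (g : raw d n) (i : 'I_(n + d - 1)) :
  ~~ ((k <= i) && (i < k + d)) -> rhon (kappa k g) i = varsigma k (rhon g) i.
Proof. by move=> out; rewrite /rhon /= tauk_out. Qed.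

End Cloning.

Theorem mainTheorem3 (d : nat) (hd : 2 <= d) :
  (forall (n k : nat), k < n -> forall g : raw d n, inA g -> inA (kappa k g)) /\
  (forall (n k : nat), k < n -> forall g g' : raw d n,
      inA g -> inA g' -> kappa k g = kappa k g' -> g = g') /\
  (forall (n k : nat), k < n -> forall g h : raw d n, inA g -> inA h ->
      kappa k (mulA g h) = mulA (kappa (natp (rhon h) k) g) (kappa k h)) /\
  (forall (n k l : nat), k < l -> l < n -> forall g : raw d n, inA g ->
      kappa k (kappa l g) = kappa (l + d - 1) (kappa k g)) /\
  (forall (n k : nat), k < n -> forall g : raw d n, inA g ->
      forall i : 'I_(n + d - 1), ~~ ((k <= i) && (i < k + d)) ->
        rhon (kappa k g) i = varsigma k (rhon g) i).
Proof.
have d_gt0 : 0 < d by apply: ltnW.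
split; [|split; [|split; [|split]]].
- by move=> n k lt_kn g; apply: inA_kappa.
- by move=> n k lt_kn g g'; apply: kappa_inj.
- by move=> n k lt_kn g h; apply: kappa_mulA.
- by move=> n k l kl ln g; apply: kappa_kappa.
- by move=> n k _ g _ i; apply: rhon_kappa_out.
Qed.
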